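(* Let $(X,\le)$ be a partially ordered set and $\tau$ a topology on $X$. Assume that: (i) every nonempty $\tau$-open set contains a diamond $J(a,b):=\{c\in X:a\le c\le b\}$ with nonempty $\tau$-interior; (ii) for any sequences $(a_n),(b_n)\subset X$ with $a_n\le a_{n+1}\le b_{n+1}\le b_n$ for all $n\in\mathbb N$, there is $c\in X$ with $a_n\le c\le b_n$ for all $n$. Then for every sequence $(U_n)$ of $\tau$-open $\tau$-dense subsets of $X$, the set $\bigcap_nU_n$ is $\tau$-dense. *)

From Stdlib Require Import Classical.

Definition subset {X : Type} (A B : X -> Prop) : Prop := forall x, A x -> B x.

Definition is_partial_order {X : Type} (le : X -> X -> Prop) : Prop :=
  (forall x, le x x) /\
  (forall x y, le x y -> le y x -> x = y) /\
  (forall x y z, le x y -> le y z -> le x z).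

Definition is_topology {X : Type} (opens : (X -> Prop) -> Prop) : Prop :=
  opens (fun _ => True) /\
  opens (fun _ => False) /\
  (forall U V, opens U -> opens V -> opens (fun x => U x /\ V x)) /\
  (forall (F : (X -> Prop) -> Prop), (forall U, F U -> opens U) ->
      opens (fun x => exists U, F U /\ U x)).

Definition nonempty {X : Type} (A : X -> Prop) : Prop := exists x, A x.

Definition interior {X : Type} (opens : (X -> Prop) -> Prop) (A : X -> Prop) : X -> Prop :=
  fun x => exists U, opens U /\ U x /\ subset U A.

Definition dense {X : Type} (opens : (X -> Prop) -> Prop) (A : X -> Prop) : Prop :=
  forall U, opens U -> nonempty U -> exists x, U x /\ A x.

Definition diamond {X : Type} (le : X -> X -> Prop) (a b : X) : X -> Prop :=
  fun c => le a c /\ le c b.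

(* Baire category argument with diamonds in place of balls: starting from a diamond inside a
   given open set, refine it inside the interior of the previous diamond intersected with U n
   (possible since U n is open and dense), and take a point c common to all the nested diamonds.
   Such a c lies in every U n and in the original open set. *)
From Stdlib Require Import ClassicalEpsilon FunctionalExtensionality PropExtensionality.

Lemma interior_sub {X : Type} (opens : (X -> Prop) -> Prop) (A : X -> Prop) :
  subset (interior opens A) A.
Proof. intros x [W [_ [HWx HWA]]]; exact (HWA x HWx). Qed.

Lemma interior_open {X : Type} (opens : (X -> Prop) -> Prop) (A : X -> Prop) :
  is_topology opens -> opens (interior opens A).
Proof.
  intros [_ [_ [_ Hunion]]].
  assert (E : interior opens A = (fun x => exists W, (opens W /\ subset W A) /\ W x)).
  { apply functional_extensionality; intro x; apply propositional_extensionality.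
    split; intros [W HW]; exists W; tauto. }
  rewrite E; apply Hunion; intros W [HW _]; exact HW.
Qed.

Lemma open_dense_meet {X : Type} (opens : (X -> Prop) -> Prop) (O W : X -> Prop) :
  is_topology opens -> opens O -> nonempty O -> opens W -> dense opens W ->
  opens (fun x => O x /\ W x) /\ nonempty (fun x => O x /\ W x).
Proof.
  intros [_ [_ [Hmeet _]]] HO HOne HW HWd; split.
  - exact (Hmeet O W HO HW).
  - destruct (HWd O HO HOne) as [x Hx]; exists x; exact Hx.
Qed.

Lemma dependent_choice_seq {T : Type} (P : T -> Prop) (R : nat -> T -> T -> Prop) (x0 : T) :
  P x0 -> (forall n x, P x -> exists y, P y /\ R n x y) ->
  exists s : nat -> T, s 0 = x0 /\ forall n, P (s n) /\ R n (s n) (s (S n)).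
Proof.
  intros H0 Hstep.
  assert (step : forall n (x : {x | P x}), {y : {y | P y} | R n (proj1_sig x) (proj1_sig y)}).
  { intros n [x Hx]; apply constructive_indefinite_description.
    destruct (Hstep n x Hx) as [y [Hy HR]]; exists (exist P y Hy); exact HR. }
  pose (s := fix s n : {x | P x} :=
    match n with O => exist P x0 H0 | S m => proj1_sig (step m (s m)) end).
  exists (fun n => proj1_sig (s n)); split; [reflexivity |].
  intro n; split; [exact (proj2_sig (s n)) | exact (proj2_sig (step n (s n)))].
Qed.

Section NestedDiamonds.

Variables (X : Type) (le : X -> X -> Prop).
Hypothesis le_refl : forall x, le x x.
Hypothesis le_trans : forall x y z, le x y -> le y z -> le x z.

Lemma diamond_nonempty_le (a b : X) : nonempty (diamond le a b) -> le a b.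
Proof. intros [c [Hac Hcb]]; exact (le_trans _ _ _ Hac Hcb). Qed.

Lemma diamond_subset_le (a b a' b' : X) :
  le a' b' -> subset (diamond le a' b') (diamond le a b) -> le a a' /\ le b' b.
Proof.
  intros Hab' Hsub; split.
  - apply (Hsub a'); split; [apply le_refl | exact Hab'].
  - apply (Hsub b'); split; [exact Hab' | apply le_refl].
Qed.

Lemma nested_diamonds_chain (a b : nat -> X) :
  (forall n, nonempty (diamond le (a n) (b n))) ->
  (forall n, subset (diamond le (a (S n)) (b (S n))) (diamond le (a n) (b n))) ->
  forall n, le (a n) (a (S n)) /\ le (a (S n)) (b (S n)) /\ le (b (S n)) (b n).
Proof.
  intros Hne Hsub n.
  pose proof (diamond_nonempty_le _ _ (Hne (S n))) as Hle.
  destruct (diamond_subset_le _ _ _ _ Hle (Hsub n)) as [Ha Hb]; auto.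
Qed.

End NestedDiamonds.

Theorem mainTheorem17 (X : Type) (le : X -> X -> Prop) (opens : (X -> Prop) -> Prop)
  (Hpo : is_partial_order le) (Htop : is_topology opens)
  (Hdiam : forall U, opens U -> nonempty U ->
     exists a b, subset (diamond le a b) U /\ nonempty (interior opens (diamond le a b)))
  (Hnest : forall a b : nat -> X,
     (forall n, le (a n) (a (S n)) /\ le (a (S n)) (b (S n)) /\ le (b (S n)) (b n)) ->
     exists c, forall n, le (a n) c /\ le c (b n))
  (U : nat -> X -> Prop) (HUo : forall n, opens (U n)) (HUd : forall n, dense opens (U n)) :
  dense opens (fun x => forall n, U n x).
Proof.
  destruct Hpo as [le_refl [_ le_trans]].
  intros V HV HVne.
  destruct (Hdiam V HV HVne) as [a0 [b0 [HJV HJ0]]].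
  pose (J := fun p : X * X => diamond le (fst p) (snd p)).
  destruct (dependent_choice_seq (fun p => nonempty (interior opens (J p)))
    (fun n p q => subset (J q) (fun x => interior opens (J p) x /\ U n x)) (a0, b0) HJ0)
    as [p [Hp0 Hp]].
  { intros n q Hq.
    destruct (open_dense_meet opens _ _ Htop (interior_open opens _ Htop) Hq (HUo n) (HUd n))
      as [Ho Hne].
    destruct (Hdiam _ Ho Hne) as [a [b [HJ HJne]]]; exists (a, b); auto. }
  destruct (Hnest (fun n => fst (p n)) (fun n => snd (p n))) as [c Hc].
  { apply (nested_diamonds_chain X le le_refl le_trans
      (fun n => fst (p n)) (fun n => snd (p n))).
    - intro n; destruct (proj1 (Hp n)) as [x Hx]; exists x; exact (interior_sub _ _ x Hx).
    - intros n x Hx; exact (interior_sub _ _ x (proj1 (proj2 (Hp n) x Hx))). }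
  exists c; split.
  - apply HJV; pose proof (Hc 0) as Hc0; rewrite Hp0 in Hc0; exact Hc0.
  - intro n; exact (proj2 (proj2 (Hp n) c (Hc (S n)))).
Qed.
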